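(* Let $\delta\ge1$ and let $f_{\text{in}}$ be a (possibly randomized, cardinal or ordinal) voting rule such that for every single-electorate instance (any nonempty finite set of agents with unit-sum valuations over $A$) we have $\max_{a\in A}\mathrm{SW}(a)\le \delta\cdot\mathbb{E}[\mathrm{SW}(f_{\text{in}})]$. Let $M$ be the distributed mechanism Uniform-of-$f_{\text{in}}$: each district $d$ selects its representative $a_d$ by applying $f_{\text{in}}$ to the agents of $N_d$, and the winner is $a_d$ for a district $d$ chosen uniformly at random from $D$. Then for every instance with $k$ districts (of arbitrary, possibly unequal, sizes), $\max_{a\in A}\mathrm{SW}(a)\le k\delta\cdot\mathbb{E}[\mathrm{SW}(M)]$; that is, the distortion of $M$ is at most $k\delta$. *)

From mathcomp Require Import all_boot all_order all_algebra.
Set Implicit Arguments. Unset Strict Implicit. Unset Printing Implicit Defensive.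
Import Order.TTheory GRing.Theory Num.Theory.
Local Open Scope ring_scope.

(* An agent is described by its valuation
   vector v : {ffun A -> R}; an electorate (set of agents) is a sequence of
   valuation vectors.  A (randomized) voting rule maps an electorate to a
   lottery over A, represented as a probability vector {ffun A -> R}.
   Ordinal rules are the special case of rules depending only on the
   rankings induced by the valuations. *)

Definition unit_sum (R : numDomainType) (A : finType) (v : {ffun A -> R}) : Prop :=
  (forall a, 0 <= v a) /\ \sum_(a : A) v a = 1.

Definition valid_electorate (R : numDomainType) (A : finType)
  (N : seq {ffun A -> R}) : Prop :=
  N != [::] /\ forall v, v \in N -> unit_sum v.

Definition is_lottery (R : numDomainType) (A : finType) (p : {ffun A -> R}) : Prop :=
  (forall a, 0 <= p a) /\ \sum_(a : A) p a = 1.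

Definition SW (R : numDomainType) (A : finType) (N : seq {ffun A -> R}) (a : A) : R :=
  \sum_(v <- N) v a.

Definition ESW (R : numDomainType) (A : finType) (sw : A -> R) (p : {ffun A -> R}) : R :=
  \sum_(a : A) p a * sw a.

Definition SW_dist (R : numDomainType) (A : finType) (k : nat)
  (N : 'I_k -> seq {ffun A -> R}) (a : A) : R :=
  \sum_(d < k) SW (N d) a.

(* Uniform-of-f: each district picks a_d ~ f (N d); a uniformly random district's
   representative wins.  Distribution of the winner. *)
Definition uniform_of (R : numFieldType) (A : finType)
  (f : seq {ffun A -> R} -> {ffun A -> R}) (k : nat)
  (N : 'I_k -> seq {ffun A -> R}) : {ffun A -> R} :=
  [ffun a => (k%:R)^-1 * \sum_(d < k) f (N d) a].

From mathcomp Require Import all_boot all_order all_algebra.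
Import Order.TTheory GRing.Theory Num.Theory.
Local Open Scope ring_scope.

(* Each district's welfare is at most delta times the expected welfare its
   representative earns inside the district, hence at most delta times what
   it earns in the whole instance.  Summing over the k districts bounds the
   total welfare by delta times k times the expected welfare of a uniformly
   random representative. *)

Lemma SW_ge0 (R : numDomainType) (A : finType) (N : seq {ffun A -> R}) (a : A) :
  valid_electorate N -> 0 <= SW N a.
Proof.
by case=> _ unitN; rewrite /SW big_seq sumr_ge0 // => v /unitN [].
Qed.

Lemma SW_le_SW_dist (R : numDomainType) (A : finType) (k : nat)
    (N : 'I_k -> seq {ffun A -> R}) (d : 'I_k) (a : A) :
  (forall d, valid_electorate (N d)) -> SW (N d) a <= SW_dist N a.
Proof.
move=> validN; rewrite /SW_dist (bigD1 d) //= lerDl.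
by apply: sumr_ge0 => e _; apply: SW_ge0.
Qed.

Lemma ler_ESW (R : numDomainType) (A : finType) (sw1 sw2 : A -> R)
    (p : {ffun A -> R}) :
  (forall a, 0 <= p a) -> (forall a, sw1 a <= sw2 a) -> ESW sw1 p <= ESW sw2 p.
Proof. by move=> p_ge0 le_sw; apply: ler_sum => a _; apply: ler_wpM2l. Qed.

Lemma ESW_uniform_of (R : numFieldType) (A : finType) (sw : A -> R)
    (f : seq {ffun A -> R} -> {ffun A -> R}) (k : nat)
    (N : 'I_k -> seq {ffun A -> R}) :
  (0 < k)%N -> k%:R * ESW sw (uniform_of f N) = \sum_(d < k) ESW sw (f (N d)).
Proof.
move=> k_gt0; rewrite /ESW exchange_big mulr_sumr; apply: eq_bigr => a _.
by rewrite ffunE mulrA mulrA mulfV ?pnatr_eq0 -?lt0n // mul1r mulr_suml.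
Qed.

Theorem theorem4 (R : realFieldType) (A : finType) (delta : R)
  (f_in : seq {ffun A -> R} -> {ffun A -> R}) :
  1 <= delta ->
  (forall N : seq {ffun A -> R}, valid_electorate N -> is_lottery (f_in N)) ->
  (forall N : seq {ffun A -> R}, valid_electorate N ->
     forall a : A, SW N a <= delta * ESW (SW N) (f_in N)) ->
  forall (k : nat) (N : 'I_k -> seq {ffun A -> R}),
    (0 < k)%N ->
    (forall d, valid_electorate (N d)) ->
    forall a : A,
      SW_dist N a <= k%:R * delta * ESW (SW_dist N) (uniform_of f_in N).
Proof.
move=> delta_ge1 lottery distortion k N k_gt0 validN a.
have delta_ge0 : 0 <= delta by apply: le_trans delta_ge1.
have districts : SW_dist N a <= delta * \sum_(d < k) ESW (SW (N d)) (f_in (N d)).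
  by rewrite /SW_dist mulr_sumr; apply: ler_sum => d _; apply: distortion.
apply: (le_trans districts).
rewrite (mulrC k%:R) -mulrA ESW_uniform_of // ler_wpM2l //.
apply: ler_sum => d _; apply: ler_ESW => [b|b].
  by case: (lottery _ (validN d)) => ->.
exact: SW_le_SW_dist.
Qed.
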